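(* Let $A$ be a left brace and let $a\in\zeta_2(\star,A)$ be an element of infinite order in $(A,+)$. Let $c=a\star a$. If $c$ has infinite order in $(A,+)$, then the subbrace $\mathbf{br}(2a)$ generated by $2a$ is not an ideal of $A$.
   Context: A left brace is a set $A$ with two operations $+$ and $\cdot$ such that $(A,+)$ is an abelian group, $(A,\cdot)$ is a group, and $a(b+c)=ab+ac-a$ for all $a,b,c\in A$. Put $a\star b=ab-a-b$. A subbrace is a subset which is a subgroup of both $(A,+)$ and $(A,\cdot)$; $\mathbf{br}(x)$ is the intersection of all subbraces containing $x$. A subbrace $L$ is an ideal if $a\star z, z\star a\in L$ for all $a\in A$, $z\in L$. The $\star$-center is $\zeta(\star,A)=\{a: a\star x=x\star a=0\ \forall x\}$ (an ideal); $\zeta_2(\star,A)$ is given by $\zeta_2(\star,A)/\zeta(\star,A)=\zeta(\star,A/\zeta(\star,A))$. *)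

From HB Require Import structures.
From mathcomp Require Import all_boot all_algebra.
Set Implicit Arguments. Unset Strict Implicit. Unset Printing Implicit Defensive.
Import GRing.Theory.
Local Open Scope ring_scope.

Record left_brace (A : zmodType) (mul : A -> A -> A) (one : A) (inv : A -> A)
  : Prop := LeftBrace {
  brace_mulA : forall a b c, mul a (mul b c) = mul (mul a b) c;
  brace_mul1 : forall a, mul one a = a;
  brace_mul1r : forall a, mul a one = a;
  brace_mulV : forall a, mul (inv a) a = one;
  brace_mulVr : forall a, mul a (inv a) = one;
  brace_distr : forall a b c, mul a (b + c) = mul a b + mul a c - a
}.

Section BraceDefs.
Variables (A : zmodType) (mul : A -> A -> A) (one : A) (inv : A -> A).

Definition star (a b : A) : A := mul a b - a - b.

Definition subbrace (L : A -> Prop) : Prop :=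
  (L 0 /\ (forall x y, L x -> L y -> L (x + y)) /\ (forall x, L x -> L (- x))) /\
  (L one /\ (forall x y, L x -> L y -> L (mul x y)) /\ (forall x, L x -> L (inv x))).

Definition br (x : A) : A -> Prop :=
  fun y => forall L, subbrace L -> L x -> L y.

Definition ideal (L : A -> Prop) : Prop :=
  subbrace L /\ forall a z, L z -> L (star a z) /\ L (star z a).

Definition zeta1 (a : A) : Prop :=
  forall x, star a x = 0 /\ star x a = 0.

(* zeta_2: a + zeta is in the star-center of A/zeta, i.e. (unfolding the
   quotient brace operations) a*x and x*a lie in zeta for all x *)
Definition zeta2 (a : A) : Prop :=
  forall x, zeta1 (star a x) /\ zeta1 (star x a).

Definition add_infinite_order (a : A) : Prop :=
  forall n : nat, (0 < n)%N -> a *+ n != 0.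

End BraceDefs.

From mathcomp Require Import all_boot all_algebra.
From mathcomp Require Import ring zify.
Import GRing.Theory.
Local Open Scope ring_scope.
Set Implicit Arguments. Unset Strict Implicit.

(* Let a ∈ ζ₂ and c = a ⋆ a ∈ ζ.  The combinations n a + m c multiply like
   a Heisenberg group, (n a + m c)(k a + l c) = (n + k) a + (m + l + n k) c,
   and (n a + m c) ⋆ (k a + l c) = n k c.  Hence {2n a + 4m c} is a subbrace
   containing 2a, so it contains br(2a).  If br(2a) were an ideal it would
   contain a ⋆ 2a = 2c; but when c has infinite order the coefficients of
   n a + m c are determined (starring with a on the left recovers n c), and
   2c = 2n a + 4m c is impossible since 4m ≠ 2. *)

Lemma translate_mulrz (U V : zmodType) (f : U -> V) (s : U) (d : V) :
  (forall x, f (x + s) = f x + d) -> forall x k, f (x + s *~ k) = f x + d *~ k.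
Proof.
move=> fD.
have fDn x n : f (x + s *+ n) = f x + d *+ n.
  elim: n x => [|n IHn] x; first by rewrite !mulr0n !addr0.
  by rewrite !mulrSr !addrA fD IHn.
move=> x [] n; first exact: fDn.
by rewrite NegzE !mulrNz; apply: (addIr (d *+ n.+1)); rewrite subrK -fDn subrK.
Qed.

Lemma mulrzI_infinite_order (U : zmodType) (x : U) :
  add_infinite_order x -> injective (fun k : int => x *~ k).
Proof.
move=> xinf; have mulrz_eq0 k : x *~ k = 0 -> k = 0.
  case: k => [[|n]|n] //= /eqP; last rewrite NegzE mulrNz oppr_eq0;
    by rewrite (negPf (xinf n.+1 isT)).
move=> k1 k2 /= E; apply/eqP; rewrite -subr_eq0; apply/eqP/mulrz_eq0.
by rewrite mulrzBr E subrr.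
Qed.

Section Brace.
Variables (A : zmodType) (mul : A -> A -> A) (one : A) (inv : A -> A).
Hypothesis HA : left_brace mul one inv.

Local Infix "·" := mul (at level 40, left associativity).
Local Infix "⋆" := (star mul) (at level 40, left associativity).

Lemma mul_star x y : x · y = x + y + x ⋆ y.
Proof. by rewrite /star addrC -(addrA (x · y)) -opprD subrK. Qed.

Lemma starDr x y z : x ⋆ (y + z) = x ⋆ y + x ⋆ z.
Proof.
rewrite /star (brace_distr HA) addrACA (addrACA (x · y)) opprD.
by rewrite -(addrA (x · y + x · z)).
Qed.

Lemma brace_mulr0 x : x · 0 = x.
Proof.
apply: (@addrI _ (x · 0)).
by rewrite -[in RHS](addr0 0) (brace_distr HA) subrK.
Qed.

Lemma brace_one0 : one = 0.
Proof. by rewrite -[LHS]brace_mulr0 (brace_mul1 HA). Qed.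

Lemma brace_invE x y : y · x = one -> inv x = y.
Proof.
move=> yx1.
by rewrite -[LHS](brace_mul1 HA) -yx1 -(brace_mulA HA) (brace_mulVr HA) (brace_mul1r HA).
Qed.

Lemma star0l y : 0 ⋆ y = 0.
Proof. by rewrite /star -{1}brace_one0 (brace_mul1 HA) subr0 subrr. Qed.

Lemma starr0 x : x ⋆ 0 = 0.
Proof. by apply: (@addrI _ (x ⋆ 0)); rewrite -starDr !addr0. Qed.

Lemma starMzr x y k : x ⋆ (y *~ k) = x ⋆ y *~ k.
Proof.
by rewrite -[y *~ k]add0r (translate_mulrz (fun z => starDr x z y)) starr0 add0r.
Qed.

Lemma starNr x y : x ⋆ - y = - (x ⋆ y).
Proof. by rewrite -mulrN1z starMzr mulrN1z. Qed.

Lemma starMl x y z : (x · y) ⋆ z = y ⋆ z + x ⋆ z + x ⋆ (y ⋆ z).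
Proof.
have regroup (u v w p q r t : A) :
    u + (v + w + q) + (p + r + t) = u + v + p + w + (q + r + t).
  by rewrite !addrA (ACl (1*2*5*3*4*6*7)).
have := brace_mulA HA x y z.
rewrite (mul_star x (y · z)) (mul_star (x · y) z) (mul_star y z).
rewrite (starDr x (y + z)) (starDr x y z) {1}(mul_star x y) regroup.
by move/addrI.
Qed.

Lemma star_zeta1_addl s x y : zeta1 mul s -> (x + s) ⋆ y = x ⋆ y.
Proof.
move=> zs; have <- : x · s = x + s by rewrite mul_star (proj2 (zs x)) addr0.
by rewrite starMl (proj1 (zs y)) starr0 add0r addr0.
Qed.

Lemma star_zeta1_addMzl s x y k : zeta1 mul s -> (x + s *~ k) ⋆ y = x ⋆ y.
Proof.
move=> zs; have shift z : (z + s) ⋆ y = z ⋆ y + 0.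
  by rewrite addr0; apply: star_zeta1_addl.
by rewrite (translate_mulrz shift) mul0rz addr0.
Qed.

Section Zeta2.
Variable a : A.
Hypothesis Ha : zeta2 mul a.
Local Notation c := (a ⋆ a).

Lemma star_addl_zeta2 x : (x + a) ⋆ a = x ⋆ a + c.
Proof.
have zt : zeta1 mul (x ⋆ a) := (Ha x).2.
have zc : zeta1 mul c := (Ha a).1.
have mul_shift : x · (a - x ⋆ a) = x + a.
  by rewrite mul_star starDr starNr (proj2 (zt x)) oppr0 addr0 (addrA x) subrK.
have shift_star : (a - x ⋆ a) ⋆ a = c.
  by rewrite -(star_zeta1_addl _ _ zt) subrK.
by rewrite -mul_shift starMl shift_star (proj2 (zc x)) addr0 addrC.
Qed.

Lemma star_Mzl k : (a *~ k) ⋆ a = c *~ k.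
Proof. by rewrite -[a *~ k]add0r (translate_mulrz star_addl_zeta2) star0l add0r. Qed.

Definition ac_comb (n m : int) : A := a *~ n + c *~ m.

Lemma ac_combD n m k l : ac_comb n m + ac_comb k l = ac_comb (n + k) (m + l).
Proof. by rewrite /ac_comb addrACA !mulrzDr. Qed.

Lemma ac_combN n m : - ac_comb n m = ac_comb (- n) (- m).
Proof. by rewrite /ac_comb opprD !mulrNz. Qed.

Lemma star_ac_comb n m k l : ac_comb n m ⋆ ac_comb k l = c *~ (n * k).
Proof.
have zc : zeta1 mul c := (Ha a).1.
rewrite /ac_comb star_zeta1_addMzl // starDr !starMzr star_Mzl (proj2 (zc _)).
by rewrite mul0rz addr0 mulrzA.
Qed.

Lemma mul_ac_comb n m k l :
  ac_comb n m · ac_comb k l = ac_comb (n + k) (m + l + n * k).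
Proof. by rewrite mul_star star_ac_comb ac_combD /ac_comb -addrA -mulrzDr. Qed.

Lemma inv_ac_comb n m : inv (ac_comb n m) = ac_comb (- n) (n * n - m).
Proof.
apply: brace_invE; rewrite mul_ac_comb addNr subrK mulNr subrr.
by rewrite /ac_comb !mulr0z addr0 brace_one0.
Qed.

Lemma ac_comb_inj n m k l :
  add_infinite_order c -> ac_comb n m = ac_comb k l -> n = k /\ m = l.
Proof.
move=> cinf E; have nk : n = k.
  apply: (mulrzI_infinite_order cinf).
  by rewrite /= -(mul1r n) -(mul1r k) -(star_ac_comb 1 0 n m) E star_ac_comb.
split=> //; subst k; apply: (mulrzI_infinite_order cinf).
exact: (@addrI _ (a *~ n)).
Qed.

Definition ac_lattice_2_4 (y : A) : Prop :=
  exists n m : int, y = ac_comb (2 * n) (4 * m).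

Lemma subbrace_ac_lattice_2_4 : subbrace mul one inv ac_lattice_2_4.
Proof.
have lattice0 : ac_lattice_2_4 0.
  by exists 0, 0; rewrite /ac_comb !mulr0 !mulr0z addr0.
split; split; rewrite ?brace_one0 //; split.
- move=> _ _ [n [m ->]] [k [l ->]]; exists (n + k), (m + l).
  by rewrite ac_combD; congr ac_comb; ring.
- move=> _ [n [m ->]]; exists (- n), (- m).
  by rewrite ac_combN; congr ac_comb; ring.
- move=> _ _ [n [m ->]] [k [l ->]]; exists (n + k), (m + l + n * k).
  by rewrite mul_ac_comb; congr ac_comb; ring.
- move=> _ [n [m ->]]; exists (- n), (n * n - m).
  by rewrite inv_ac_comb; congr ac_comb; ring.
Qed.

End Zeta2.

End Brace.

Theorem lemma3p7 (A : zmodType) (mul : A -> A -> A) (one : A) (inv : A -> A)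
  (HA : left_brace mul one inv) (a : A) :
  zeta2 mul a -> add_infinite_order a ->
  add_infinite_order (star mul a a) ->
  ~ ideal mul one inv (br mul one inv (a *+ 2)).
Proof.
move=> Ha _ cinf [_ br_ideal].
have lattice := subbrace_ac_lattice_2_4 HA Ha.
have two_a : ac_lattice_2_4 mul a (a *+ 2).
  by exists 1, 0; rewrite /ac_comb mulr1 mulr0 mulr0z addr0 -mulrz_nat.
have two_c : star mul a (a *+ 2) = ac_comb mul a 0 2.
  by rewrite -mulrz_nat (starMzr HA) /ac_comb mulr0z add0r.
have := (br_ideal a (a *+ 2) (fun _ _ L2a => L2a)).1 _ lattice two_a.
rewrite two_c => -[n [m /(ac_comb_inj HA Ha cinf) [_ two_eq]]].
lia.
Qed.
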